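(* Let $\Phi = \{\xi = (\tau_L,\delta_L,\tau_R,\delta_R) \in \mathbb{R}^4 : \tau_L > |\delta_L + 1|,\ \tau_R < -|\delta_R+1|\}$ and $\Phi^{(3)} = \{\xi \in \Phi : \delta_L > 0, \delta_R < 0\}$. Let $\alpha(\xi) = \tau_L\tau_R + (\delta_L-1)(\delta_R-1)$ and $g(\xi) = (\tau_R^2 - 2\delta_R,\ \delta_R^2,\ \tau_L\tau_R - \delta_L - \delta_R,\ \delta_L\delta_R)$. For $\xi \in \Phi$ let $\lambda_L^u>1$ be the eigenvalue of $\begin{bmatrix}\tau_L & 1\\ -\delta_L & 0\end{bmatrix}$ of modulus greater than one, $\lambda_R^u<-1$ the eigenvalue of $\begin{bmatrix}\tau_R & 1\\ -\delta_R & 0\end{bmatrix}$ of modulus greater than one, and $$\phi^+(\xi) = \delta_R - \big(\tau_R + \delta_L + \delta_R - (1+\tau_R)\lambda_L^u\big)\lambda_L^u,\qquad \phi^-(\xi) = \delta_R - \big(\delta_R + \tau_R - (1+\lambda_R^u)\lambda_L^u\big)\lambda_L^u,$$ $\phi_{\min}(\xi) = \min[\phi^+(\xi),\phi^-(\xi)]$. For $n \ge 0$ define $$\mathcal{R}^{(3)}_n = \{\xi \in \Phi^{(3)} : \phi_{\min}(g^n(\xi)) > 0,\ \phi_{\min}(g^{n+1}(\xi)) \le 0,\ \alpha(\xi) < 0\}.$$ If $\xi \in \mathcal{R}^{(3)}_n$ with $n \ge 1$, then $g(\xi) \in \mathcal{R}^{(3)}_{n-1}$.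
   Context: $g^n$ denotes the $n$-fold composition of $g$; the conditions in the set definitions are understood to include that the relevant iterates $g^k(\xi)$ lie in $\Phi$, so that $\phi_{\min}$ is defined at them. *)

From Stdlib Require Import Reals Lra ClassicalEpsilon.
Open Scope R_scope.

Record xi4 : Type := mkXi { tauL : R; deltaL : R; tauR : R; deltaR : R }.

Definition inPhi (x : xi4) : Prop :=
  tauL x > Rabs (deltaL x + 1) /\ tauR x < - Rabs (deltaR x + 1).

Definition inPhi3 (x : xi4) : Prop :=
  inPhi x /\ deltaL x > 0 /\ deltaR x < 0.

Definition alpha (x : xi4) : R :=
  tauL x * tauR x + (deltaL x - 1) * (deltaR x - 1).

Definition g (x : xi4) : xi4 :=
  mkXi (tauR x ^ 2 - 2 * deltaR x) (deltaR x ^ 2)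
       (tauL x * tauR x - deltaL x - deltaR x) (deltaL x * deltaR x).

(* lam is an eigenvalue of [[tau, 1], [-delta, 0]]:
   det([[tau,1],[-delta,0]] - lam I) = 0. *)
Definition is_eig (tau delta lam : R) : Prop :=
  (tau - lam) * (0 - lam) - 1 * (- delta) = 0.

Lemma R_inhabited : inhabited R.
Proof. exact (inhabits 0). Qed.

(* the eigenvalue of modulus greater than one (unique for x in Phi) *)
Definition lamLu (x : xi4) : R :=
  epsilon R_inhabited (fun l => is_eig (tauL x) (deltaL x) l /\ Rabs l > 1).

Definition lamRu (x : xi4) : R :=
  epsilon R_inhabited (fun l => is_eig (tauR x) (deltaR x) l /\ Rabs l > 1).

Definition phi_plus (x : xi4) : R :=
  deltaR x - (tauR x + deltaL x + deltaR x - (1 + tauR x) * lamLu x) * lamLu x.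

Definition phi_minus (x : xi4) : R :=
  deltaR x - (deltaR x + tauR x - (1 + lamRu x) * lamLu x) * lamLu x.

Definition phi_min (x : xi4) : R := Rmin (phi_plus x) (phi_minus x).

Definition giter (n : nat) (x : xi4) : xi4 := Nat.iter n g x.

(* R^(3)_n; membership of the relevant iterates in Phi is made explicit *)
Definition Rn3 (n : nat) (x : xi4) : Prop :=
  inPhi3 x /\
  inPhi (giter n x) /\ phi_min (giter n x) > 0 /\
  inPhi (giter (S n) x) /\ phi_min (giter (S n) x) <= 0 /\
  alpha x < 0.

(* Since g^k (g xi) = g^(k+1) xi, the conditions on phi_min in the definition of
   R^(3)_n transfer verbatim from xi to g xi with the index lowered by one; what
   remains is that g maps {xi in Phi^(3) | alpha xi < 0} into itself.  Writing
   X = deltaL + deltaR - tauL tauR, the hypothesis alpha < 0 is exactly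
   X > deltaL deltaR + 1, which together with tauL |tauR| > |deltaL + 1| |deltaR + 1|
   gives the Phi-condition on the second half of g xi.  Finally
   alpha (g xi) = (deltaR^2 - 1)(deltaL deltaR - 1) - (tauR^2 - 2 deltaR) X, and
   tauR^2 - 2 deltaR > deltaR^2 + 1 reduces its sign to a two-case polynomial
   comparison according to the sign of deltaL + deltaR. *)
From Stdlib Require Import Reals Lra Psatz.
Open Scope R_scope.

Lemma giter_g (m : nat) (x : xi4) : giter m (g x) = giter (S m) x.
Proof. exact (Nat.iter_swap m xi4 g x). Qed.

Lemma inPhi_tauR_sq_gt (x : xi4) :
  inPhi x -> (deltaR x + 1) ^ 2 < tauR x ^ 2.
Proof.
  intros [_ HtR].
  rewrite <- pow2_abs.
  pose proof (Rabs_pos (deltaR x + 1)).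
  nra.
Qed.

Lemma inPhi_abs_prod_lt (x : xi4) :
  inPhi x -> Rabs (deltaL x + 1) * Rabs (deltaR x + 1) < - (tauL x * tauR x).
Proof.
  intros [HtL HtR].
  replace (- (tauL x * tauR x)) with (tauL x * - tauR x) by ring.
  apply Rmult_le_0_lt_compat; try apply Rabs_pos; lra.
Qed.

Section Phi3.

Variables tL dL tR dR : R.
Hypothesis Hx : inPhi3 (mkXi tL dL tR dR).

Lemma inPhi3_prod_bounds :
  (dL + 1) * (dR + 1) < - (tL * tR) /\ - ((dL + 1) * (dR + 1)) < - (tL * tR).
Proof.
  destruct Hx as [HPhi [HdL _]]; cbn in HdL.
  pose proof (inPhi_abs_prod_lt _ HPhi) as Hprod; cbn in Hprod.
  rewrite (Rabs_right (dL + 1)) in Hprod by lra.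
  pose proof (Rle_abs (dR + 1)).
  pose proof (Rle_abs (- (dR + 1))).
  rewrite Rabs_Ropp in *.
  split; nra.
Qed.

Hypothesis Halpha : alpha (mkXi tL dL tR dR) < 0.

Lemma alpha_neg_cross_term : dL * dR + 1 < dL + dR - tL * tR.
Proof. unfold alpha in Halpha; cbn in Halpha; nra. Qed.

Lemma abs_cross_term_lt : Rabs (dL * dR + 1) < dL + dR - tL * tR.
Proof.
  pose proof alpha_neg_cross_term.
  destruct inPhi3_prod_bounds.
  apply Rabs_def1; nra.
Qed.

Lemma inPhi3_g : inPhi3 (g (mkXi tL dL tR dR)).
Proof.
  pose proof (inPhi_tauR_sq_gt _ (proj1 Hx)) as Hsq; cbn in Hsq.
  pose proof abs_cross_term_lt.
  destruct Hx as [_ [HdL HdR]]; cbn in HdL, HdR.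
  unfold inPhi3, inPhi, g; cbn.
  rewrite Rabs_right by nra.
  repeat split; nra.
Qed.

Lemma cross_term_weighted_bound :
  (dR ^ 2 - 1) * (dL * dR - 1) <= (dR ^ 2 + 1) * (dL + dR - tL * tR).
Proof.
  pose proof alpha_neg_cross_term.
  destruct inPhi3_prod_bounds as [Hprod _].
  destruct Hx as [_ [HdL HdR]]; cbn in HdL, HdR.
  destruct (Rle_or_lt dL (- dR)).
  - assert (E : (dR ^ 2 + 1) * (dL * dR + 1) - (dR ^ 2 - 1) * (dL * dR - 1)
                = 2 * dR * (dL + dR)) by ring.
    nra.
  - assert (E : (dR ^ 2 + 1) * ((dL + 1) * (dR + 1) + dL + dR)
                  - (dR ^ 2 - 1) * (dL * dR - 1)
                = 2 * (dL + dR) * (dR ^ 2 + dR + 1)) by ring.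
    assert (0 < dR ^ 2 + dR + 1) by nra.
    nra.
Qed.

Lemma alpha_g_neg : alpha (g (mkXi tL dL tR dR)) < 0.
Proof.
  pose proof (inPhi_tauR_sq_gt _ (proj1 Hx)) as Hsq; cbn in Hsq.
  pose proof cross_term_weighted_bound.
  pose proof abs_cross_term_lt.
  pose proof (Rabs_pos (dL * dR + 1)).
  unfold alpha, g; cbn.
  replace ((tR ^ 2 - 2 * dR) * (tL * tR - dL - dR))
    with (- ((tR ^ 2 - 2 * dR) * (dL + dR - tL * tR))) by ring.
  nra.
Qed.

End Phi3.

Theorem proposition8p1 (n : nat) (x : xi4) :
  (1 <= n)%nat -> Rn3 n x -> Rn3 (n - 1) (g x).
Proof.
  intros Hn [HPhi3 [HPhi_n [Hphi_n [HPhi_Sn [Hphi_Sn Halpha]]]]].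
  destruct n as [|m]; [inversion Hn|].
  replace (S m - 1)%nat with m by lia.
  destruct x as [tL dL tR dR].
  pose proof (inPhi3_g _ _ _ _ HPhi3 Halpha).
  pose proof (alpha_g_neg _ _ _ _ HPhi3 Halpha).
  unfold Rn3; rewrite !giter_g.
  tauto.
Qed.
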